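(* Let $M$ be a matroid, let $S,T$ be disjoint subsets of $E(M)$, let $k:=\kappa_M(S,T)$, and let $U$ be a set with $S\subseteq U\subseteq E(M)-T$ and $\lambda_M(U)=k$. If $e\in E(M)-(T\cup U)$ satisfies $\kappa_{M/e}(S,T)\neq\kappa_M(S,T)$, then $\kappa_{M/e}(U,T)\neq\kappa_M(U,T)$.
   Context: For a matroid $M$ with ground set $E$, $\lambda_M(X):=r_M(X)+r_M(E-X)-r(M)$, and for disjoint $S,T\subseteq E$, $\kappa_M(S,T):=\min\{\lambda_M(X):S\subseteq X\subseteq E-T\}$. *)

From mathcomp Require Import all_boot.
Set Implicit Arguments. Unset Strict Implicit. Unset Printing Implicit Defensive.

(* Values of r outside subsets of E are irrelevant. *)
Definition is_matroid (V : finType) (E : {set V}) (r : {set V} -> nat) : Prop :=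
  [/\ (forall X : {set V}, X \subset E -> r X <= #|X|),
      (forall X Y : {set V}, X \subset Y -> Y \subset E -> r X <= r Y) &
      (forall X Y : {set V}, X \subset E -> Y \subset E ->
         r (X :|: Y) + r (X :&: Y) <= r X + r Y)].

(* lambda_M(X) = r(X) + r(E - X) - r(M), with r(M) = r(E);
   nonnegative by submodularity, so truncated subtraction is harmless. *)
Definition conn (V : finType) (E : {set V}) (r : {set V} -> nat) (X : {set V}) : nat :=
  r X + r (E :\: X) - r E.

(* kappa_M(S,T) = min { lambda_M(X) : S <= X <= E - T }.  The default value
   r(E) is an upper bound of every lambda_M(X), so it does not affect the
   minimum when the range is nonempty. *)
Definition kappa (V : finType) (E : {set V}) (r : {set V} -> nat) (S T : {set V}) : nat :=
  \big[minn/r E]_(X : {set V} | (S \subset X) && (X \subset E :\: T)) conn E r X.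

Definition contr_ground (V : finType) (E : {set V}) (e : V) : {set V} := E :\ e.
Definition contr_rk (V : finType) (r : {set V} -> nat) (e : V) (X : {set V}) : nat :=
  r (X :|: [set e]) - r [set e].

From mathcomp Require Import all_boot order zify.
Import Order.TTheory.
Set Implicit Arguments. Unset Strict Implicit. Unset Printing Implicit Defensive.

(* Contracting e never increases lambda: for e outside X,
   lambda_{M/e}(X) = lambda_M(X) - (r(X) + r(e) - r(X + e)).  Hence
   kappa_{M/e}(S,T) <= lambda_{M/e}(U) <= lambda_M(U) = k, and if the two
   kappas differ there is a set X with S <= X <= E - e - T and
   lambda_{M/e}(X) < k.  Submodularity of r, applied to X + e and U and to
   their complements, gives
   lambda_{M/e}(X u U) + lambda_M(X n U) <= lambda_{M/e}(X) + lambda_M(U),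
   and lambda_M(X n U) >= k = lambda_M(U) since X n U separates S from T.
   So lambda_{M/e}(X u U) < k <= kappa_M(U,T), while X u U separates U
   from T in M/e. *)

Lemma setUDK (T : finType) (A B : {set T}) : A \subset B -> A :|: B :\: A = B.
Proof. by move=> sAB; rewrite -{2}(setID B A) (setIidPr sAB). Qed.

Section Connectivity.
Variables (V : finType) (E : {set V}) (r : {set V} -> nat).
Hypothesis matroid_r : is_matroid E r.
Implicit Types S T U X Y : {set V}.

Lemma rank_le_card X : X \subset E -> r X <= #|X|.
Proof. by case: matroid_r => h _ _; apply: h. Qed.

Lemma rank_mono X Y : X \subset Y -> Y \subset E -> r X <= r Y.
Proof. by case: matroid_r => _ h _; apply: h. Qed.

Lemma rank_submod X Y : X \subset E -> Y \subset E ->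
  r (X :|: Y) + r (X :&: Y) <= r X + r Y.
Proof. by case: matroid_r => _ _ h; apply: h. Qed.

Lemma rank_le_total X : X \subset E -> r X <= r E.
Proof. by move=> sXE; apply: rank_mono. Qed.

Lemma connE X : X \subset E -> conn E r X + r E = r X + r (E :\: X).
Proof.
move=> sXE; have := rank_submod sXE (subsetDl E X).
rewrite setUDK // /conn; lia.
Qed.

Lemma conn_le_rank X : X \subset E -> conn E r X <= r E.
Proof.
move=> sXE; have := rank_le_total sXE; have := rank_le_total (subsetDl E X).
rewrite /conn; lia.
Qed.

Lemma kappa_le_conn S T X :
  S \subset X -> X \subset E :\: T -> kappa E r S T <= conn E r X.
Proof.
move=> sSX sXET; rewrite /kappa -minEnat.
by apply: (@bigmin_le_cond _ nat {set V} (r E) X); rewrite sSX.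
Qed.

Lemma kappa_attained S T : S \subset E :\: T ->
  exists2 X : {set V}, (S \subset X) && (X \subset E :\: T) &
    kappa E r S T = conn E r X.
Proof.
move=> sSET; rewrite /kappa -minEnat.
have feasS : (S \subset S) && (S \subset E :\: T) by rewrite subxx sSET.
rewrite (bigmin_eq_arg (r E) S (fun X => (S \subset X) && (X \subset E :\: T))
           (conn E r) feasS).
  by case: arg_minP => // X feasX _; exists X.
move=> X /andP[_ sXET]; apply: conn_le_rank.
exact: subset_trans sXET (subsetDl E T).
Qed.

Lemma kappa_subset S U T : S \subset U -> U \subset E :\: T ->
  kappa E r S T <= kappa E r U T.
Proof.
move=> sSU sUET; have [X /andP[sUX sXET] ->] := kappa_attained sUET.
exact: kappa_le_conn (subset_trans sSU sUX) sXET.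
Qed.

End Connectivity.

Section Contraction.
Variables (V : finType) (E : {set V}) (r : {set V} -> nat) (e : V).
Hypotheses (matroid_r : is_matroid E r) (eE : e \in E).
Implicit Types U X Y : {set V}.

Local Notation E' := (contr_ground E e).
Local Notation r' := (contr_rk r e).

Let sub_eE : [set e] \subset E. Proof. by rewrite sub1set. Qed.

Let rankU1_le X : X \subset E -> r (X :|: [set e]) <= r X + r [set e].
Proof. by move=> sXE; have := rank_submod matroid_r sXE sub_eE; lia. Qed.

Let rank1_leU X : X \subset E -> r [set e] <= r (X :|: [set e]).
Proof.
by move=> sXE; apply: (rank_mono matroid_r (subsetUr X _)); rewrite subUset sXE.
Qed.

Lemma contr_matroid : is_matroid E' r'.
Proof.
have sE'E : E' \subset E := subsetDl E [set e].
rewrite /contr_rk; split=> [X sXE'|X Y sXY sYE'|X Y sXE' sYE'].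
- have sXE := subset_trans sXE' sE'E.
  have := rankU1_le sXE; have := rank_le_card matroid_r sXE; lia.
- have sYE := subset_trans sYE' sE'E.
  have := rank_mono matroid_r (setSU [set e] sXY); rewrite subUset sYE sub_eE.
  move=> /(_ isT); lia.
- have sXE := subset_trans sXE' sE'E; have sYE := subset_trans sYE' sE'E.
  have sXYE : X :|: Y \subset E by rewrite subUset sXE sYE.
  have := rank1_leU sXE; have := rank1_leU sYE; have := rank1_leU sXYE.
  have := rank1_leU (subset_trans (subsetIl X Y) sXE).
  have := rank_submod matroid_r (X := X :|: [set e]) (Y := Y :|: [set e]).
  rewrite -setUUl -setUIl !subUset sXE sYE sub_eE => /(_ isT isT); lia.
Qed.

Lemma conn_contr Y : Y \subset E -> e \notin Y ->
  conn E' r' Y + r [set e] + r E = r (Y :|: [set e]) + r (E :\: Y).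
Proof.
move=> sYE eNY; have eEY : e \in E :\: Y by rewrite inE eNY.
rewrite /conn /contr_rk.
have -> : E' :\: Y :|: [set e] = E :\: Y.
  by rewrite /contr_ground setDDl (setUC [set e]) -setDDl setUC setD1K.
have -> : E' :|: [set e] = E by rewrite /contr_ground setUC setD1K.
have sYeE : Y :|: [set e] \subset E by rewrite subUset sYE sub_eE.
have := rank_submod matroid_r sYeE (subsetDl E Y).
have -> : Y :|: [set e] :|: E :\: Y = E.
  by rewrite setUAC setUDK //; apply/setUidPl.
have := rank_mono matroid_r (X := [set e]) (Y := (Y :|: [set e]) :&: (E :\: Y)).
rewrite sub1set !inE eqxx orbT eNY eE => /(_ isT); rewrite subIset ?sYeE //.
have := rank1_leU sYE; have := rank_le_total matroid_r sub_eE.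
have := rank_mono matroid_r (X := [set e]) (Y := E :\: Y).
rewrite sub1set eEY subsetDl => /(_ isT isT); lia.
Qed.

Lemma conn_contr_le Y : Y \subset E -> e \notin Y -> conn E' r' Y <= conn E r Y.
Proof.
move=> sYE eNY; have := conn_contr sYE eNY; have := connE matroid_r sYE.
have := rankU1_le sYE; lia.
Qed.

Lemma conn_contr_setU_le X U :
    X \subset E -> U \subset E -> e \notin X -> e \notin U ->
  conn E' r' (X :|: U) + conn E r (X :&: U) <= conn E' r' X + conn E r U.
Proof.
move=> sXE sUE eNX eNU.
have sXUE : X :|: U \subset E by rewrite subUset sXE sUE.
have sXeE : X :|: [set e] \subset E by rewrite subUset sXE sub_eE.
have := rank_submod matroid_r sXeE sUE.
rewrite setUAC; have -> : (X :|: [set e]) :&: U = X :&: U.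
  by rewrite setIUl (@disjoint_setI0 _ [set e] U) ?setU0 // disjoints1.
have := rank_submod matroid_r (subsetDl E X) (subsetDl E U).
rewrite -setDIr -setDUr.
have eNXU : e \notin X :|: U by rewrite inE negb_or eNX eNU.
have := conn_contr sXE eNX; have := conn_contr sXUE eNXU.
have := connE matroid_r sUE; have := connE matroid_r (subset_trans (subsetIl X U) sXE).
lia.
Qed.

End Contraction.

Theorem lemma3p6 (V : finType) (E : {set V}) (r : {set V} -> nat)
  (S T U : {set V}) (e : V) :
  is_matroid E r ->
  S \subset E -> T \subset E -> [disjoint S & T] ->
  S \subset U -> U \subset E :\: T ->
  conn E r U = kappa E r S T ->
  e \in E :\: (T :|: U) ->
  kappa (contr_ground E e) (contr_rk r e) S T <> kappa E r S T ->
  kappa (contr_ground E e) (contr_rk r e) U T <> kappa E r U T.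
Proof.
move=> matroid_r _ _ _ sSU sUET connU.
rewrite !inE negb_or => /andP[/andP[_ eNU] eE].
set k := kappa E r S T => kappa'S_neq.
have sUE : U \subset E := subset_trans sUET (subsetDl E T).
have sUE'T : U \subset contr_ground E e :\: T.
  by rewrite /contr_ground setDDl setUC -setDDl subsetD1 sUET eNU.
have kappa'S_lt : kappa (contr_ground E e) (contr_rk r e) S T < k.
  rewrite ltn_neqAle; apply/andP; split; first exact/eqP.
  rewrite /k -connU; apply: leq_trans (conn_contr_le matroid_r eE sUE eNU).
  exact: kappa_le_conn.
have [X /andP[sSX sXE'T] kappa'SE] :=
  kappa_attained (contr_matroid matroid_r eE) (subset_trans sSU sUE'T).
have sXE : X \subset E :=
  subset_trans sXE'T (subset_trans (subsetDl _ T) (subsetDl E _)).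
have eNX : e \notin X.
  by apply/negP => /(subsetP sXE'T); rewrite /contr_ground !inE eqxx andbF.
have k_le_connXIU : k <= conn E r (X :&: U).
  by apply: kappa_le_conn; rewrite ?subsetI ?sSX // (subset_trans (subsetIr X U)).
have k_le_kappaU : k <= kappa E r U T := kappa_subset matroid_r sSU sUET.
have := conn_contr_setU_le matroid_r eE sXE sUE eNX eNU.
have : kappa (contr_ground E e) (contr_rk r e) U T
       <= conn (contr_ground E e) (contr_rk r e) (X :|: U).
  by apply: kappa_le_conn; rewrite ?subsetUr // subUset sXE'T.
lia.
Qed.
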